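(* In the asynchronous online testing setting described in the context, suppose that the null $p$-values are independent of each other and of the non-null $p$-values, and that the test levels $\alpha_t$ (and candidacy thresholds $\lambda_t$) are monotone. Then $\mathrm{LORD}_{\mathrm{async}}$ and $\mathrm{SAFFRON}_{\mathrm{async}}$ with target level $\alpha$ both guarantee $\mathrm{FDR}(t)\le\alpha$ for all $t\in\mathbb{N}$.
   Context: Hypotheses $H_1,H_2,\dots$ are tested; the test of $H_t$ starts at step $t$ with test level $\alpha_t\ge0$ (and, for SAFFRON-type procedures, a candidacy threshold $\lambda_t$ with $\alpha_t\le\lambda_t<1$) and produces a $p$-value $P_t$; if $H_t$ is a true null, $P_t$ is super-uniform: $\mathbb{P}(P_t\le u)\le u$ for all $u\in[0,1]$. $\mathcal{H}^0$ is the fixed set of true null indices. Test $t$ has a fixed decision time $E_t\ge t$. For each step $s$, let $\mathcal{R}_s=\{i\in[s]: E_i=s,\ P_i\le\alpha_i\}$ and $\mathcal{C}_s=\{i\in[s]:E_i=s,\ P_i\le\lambda_i\}$. In $\mathrm{LORD}_{\mathrm{async}}$, $\alpha_t=f_t(\mathcal{R}_1,\dots,\mathcal{R}_{t-1})$ for deterministic functions $f_t$, chosen so that for all $t$, $\sum_{j\le t}\alpha_j\le\alpha\big((\sum_{j\le t}\mathbf{1}\{P_j\le\alpha_j,\ E_j<t\})\vee1\big)$. In $\mathrm{SAFFRON}_{\mathrm{async}}$, $\alpha_t=g_t(\mathcal{R}_1,\mathcal{C}_1,\dots,\mathcal{R}_{t-1},\mathcal{C}_{t-1})$ and $\lambda_t=h_t(\mathcal{R}_1,\mathcal{C}_1,\dots,\mathcal{R}_{t-1},\mathcal{C}_{t-1})$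 for deterministic $g_t,h_t$, chosen so that for all $t$, $\sum_{j\le t}\frac{\alpha_j}{1-\lambda_j}\big(\mathbf{1}\{P_j>\lambda_j,\ E_j<t\}+\mathbf{1}\{E_j\ge t\}\big)\le\alpha\big((\sum_{j\le t}\mathbf{1}\{P_j\le\alpha_j,\ E_j<t\})\vee1\big)$. Monotone means: each of $f_t$ (resp. $g_t,h_t$) does not decrease when any argument $\mathcal{R}_i$ (or $\mathcal{C}_i$) is replaced by a superset, the other arguments fixed. $\mathcal{R}(t)=\{i\in[t]:E_i\le t,\ P_i\le\alpha_i\}$, $\mathcal{V}(t)=\mathcal{R}(t)\cap\mathcal{H}^0$, and $\mathrm{FDR}(t)=\mathbb{E}\big[|\mathcal{V}(t)|/(|\mathcal{R}(t)|\vee1)\big]$. *)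

From HB Require Import structures.
From mathcomp Require Import all_boot all_order all_algebra.
From mathcomp Require Import all_classical all_reals all_analysis.
Set Implicit Arguments. Unset Strict Implicit. Unset Printing Implicit Defensive.
Import Order.TTheory GRing.Theory Num.Theory.
Local Open Scope classical_set_scope.
Local Open Scope ring_scope.

(* Hypotheses/tests are indexed by positive naturals 1, 2, 3, ...         *)
(* A "history" encodes a sequence of index sets (S_1, S_2, ...):           *)
(*   h s i = true  <->  i \in S_s.                                          *)
Definition history := nat -> nat -> bool.

Section Defs.
Context (R : realType) (d : measure_display) (Omega : measurableType d).

(* The history (R_1, ..., R_{t-1}) at sample point w, where                 *)
(*   R_s = { i in [s] : E_i = s, P_i <= thr_i }.                            *)
(* With thr = alpha this is (R_s)_{s<t}; with thr = lambda it is (C_s)_{s<t}. *)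
Definition hist_upto (E : nat -> nat) (p thr : nat -> Omega -> R) (t : nat)
  (w : Omega) : history :=
  fun s i => [&& (0 < s)%N, (s < t)%N, (0 < i)%N, (i <= s)%N, E i == s & p i w <= thr i w].

(* (Taking h, h' equal on the relevant entries shows F depends only on them.) *)
Definition hist_mono (t : nat) (F : history -> R) :=
  forall h h' : history,
    (forall s i, (0 < s)%N -> (s < t)%N -> (0 < i)%N -> (i <= s)%N -> h s i -> h' s i) ->
    F h <= F h'.

Definition hist_mono2 (t : nat) (F : history -> history -> R) :=
  forall h1 h2 h1' h2' : history,
    (forall s i, (0 < s)%N -> (s < t)%N -> (0 < i)%N -> (i <= s)%N -> h1 s i -> h1' s i) ->
    (forall s i, (0 < s)%N -> (s < t)%N -> (0 < i)%N -> (i <= s)%N -> h2 s i -> h2' s i) ->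
    F h1 h2 <= F h1' h2'.

Definition num_rej (E : nat -> nat) (p alpha : nat -> Omega -> R) (t : nat)
  (w : Omega) : R :=
  \sum_(1 <= i < t.+1) ((E i <= t)%N && (p i w <= alpha i w))%:R.

Definition num_false_rej (H0 : nat -> bool) (E : nat -> nat)
  (p alpha : nat -> Omega -> R) (t : nat) (w : Omega) : R :=
  \sum_(1 <= i < t.+1) [&& H0 i, (E i <= t)%N & p i w <= alpha i w]%:R.

Definition num_rej_before (E : nat -> nat) (p alpha : nat -> Omega -> R)
  (t : nat) (w : Omega) : R :=
  \sum_(1 <= j < t.+1) ((E j < t)%N && (p j w <= alpha j w))%:R.

Definition FDP (H0 : nat -> bool) (E : nat -> nat) (p alpha : nat -> Omega -> R)
  (t : nat) (w : Omega) : R :=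
  num_false_rej H0 E p alpha t w / Num.max (num_rej E p alpha t w) 1.

Definition FDR (Pr : probability Omega R) (H0 : nat -> bool) (E : nat -> nat)
  (p alpha : nat -> Omega -> R) (t : nat) : \bar R :=
  (\int[Pr]_w (FDP H0 E p alpha t w)%:E)%E.

Definition superuniform (Pr : probability Omega R) (X : Omega -> R) :=
  forall u : R, 0 <= u <= 1 -> (Pr [set w | (X w <= u)%R] <= u%:E)%E.

Definition nulls_independent (Pr : probability Omega R) (H0 : nat -> bool)
  (p : nat -> Omega -> R) :=
  forall (F G : seq nat) (B : nat -> set R),
    uniq F -> all H0 F -> all (fun j => ~~ H0 j) G ->
    (forall i, measurable (B i)) ->
    Pr (\big[setI/setT]_(i <- F ++ G) (p i @^-1` B i)) =
    ((\prod_(i <- F) Pr (p i @^-1` B i)) *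
       Pr (\big[setI/setT]_(j <- G) (p j @^-1` B j)))%E.

End Defs.

From HB Require Import structures.
From mathcomp Require Import all_boot all_order all_algebra.
From mathcomp Require Import all_classical all_reals all_analysis.
From mathcomp Require Import measurable_realfun.
Import Order.TTheory GRing.Theory Num.Theory.
Local Open Scope classical_set_scope.
Local Open Scope ring_scope.
Set Implicit Arguments. Unset Strict Implicit. Unset Printing Implicit Defensive.

(* Fix a horizon n and a null hypothesis j. Replacing P_j by -1 (always rejected, always a
   candidate) yields a rejection/candidacy pattern gamma of tests 1..n that is a function of
   the other p-values only, hence independent of P_j. On the event {gamma}, the true levels
   alpha_j, lambda_j equal those computed from gamma, since they only see decisions taken
   before j; if P_j <= alpha_j the true pattern is gamma, and in any case it is dominated by
   gamma by monotonicity, so |R| <= |R_gamma|. Conditionally on gamma, super-uniformity gives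
     P(P_j <= alpha_j) / |R_gamma| <= alpha_j / |R_gamma|
                                   <= alpha_j / (1 - lambda_j) * P(P_j > lambda_j) / |R_gamma|,
   so E[1{H_j rejected} / |R|] <= E[alpha_j / (1 - lambda_j) 1{P_j > lambda_j} / |R|].
   Summing over the nulls and applying the budget constraint at time n + 1 bounds FDR(n)
   by alpha. LORD is the special case lambda_j = 0. *)

(* The outcome of test [i] is the pair ([P_i <= alpha_i], [P_i <= kappa_i]). *)
Definition outcome := (bool * bool)%type.

Definition sub_outcome (u v : outcome) := (u.1 ==> v.1) && (u.2 ==> v.2).

Section Histories.
Variables (R : realType) (E : nat -> nat).

Definition hist_of (t : nat) (b : nat -> bool) : history := fun s i =>
  [&& (0 < s)%N, (s < t)%N, (0 < i)%N, (i <= s)%N, E i == s & b i].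

Lemma eq_hist_of t b b' : (forall i, (0 < i < t)%N -> b i = b' i) ->
  hist_of t b = hist_of t b'.
Proof.
move=> eqb; apply/funext=> s; apply/funext=> i; rewrite /hist_of.
case: (boolP [&& 0 < s, s < t, 0 < i & i <= s]%N) => [/and4P[s0 st i0 is_]|].
  by rewrite s0 st i0 is_ eqb // i0 (leq_ltn_trans is_ st).
by case: (0 < s)%N; case: (s < t)%N; case: (0 < i)%N; case: (i <= s)%N.
Qed.

Lemma sub_hist_of t (b b' : nat -> bool) : (forall i, (0 < i < t)%N -> b i -> b' i) ->
  forall s i, (0 < s)%N -> (s < t)%N -> (0 < i)%N -> (i <= s)%N ->
  hist_of t b s i -> hist_of t b' s i.
Proof.
move=> bb' s i s0 st i0 is_; rewrite /hist_of s0 st i0 is_ /= => /andP[-> bi].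
by rewrite bb' // i0 (leq_ltn_trans is_ st).
Qed.

Definition eval_hist (F : nat -> history -> history -> R) t (bv : nat -> outcome) :=
  F t (hist_of t (fun i => (bv i).1)) (hist_of t (fun i => (bv i).2)).

Lemma eq_eval_hist F t bv bv' : (forall i, (0 < i < t)%N -> bv i = bv' i) ->
  eval_hist F t bv = eval_hist F t bv'.
Proof.
by move=> eqbv; rewrite /eval_hist; congr (F t _ _); apply: eq_hist_of => i /eqbv ->.
Qed.

Lemma le_eval_hist F t bv bv' : hist_mono2 t (F t) ->
  (forall i, (0 < i < t)%N -> sub_outcome (bv i) (bv' i)) ->
  eval_hist F t bv <= eval_hist F t bv'.
Proof.
move=> monoF sub; apply: monoF; apply: sub_hist_of => i /sub /andP[/implyP ? /implyP ?] //.
Qed.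

End Histories.

Section Consistency.
Context (R : realType) (d : measure_display) (Omega : measurableType d).
Variable rule : nat -> R -> (nat -> outcome) -> outcome.
Hypothesis rule_causal : forall t x bv bv',
  (forall i, (0 < i < t)%N -> bv i = bv' i) -> rule t x bv = rule t x bv'.
Variable n : nat.

Definition pattern := {ffun 'I_n -> outcome}.

(* Test [i >= 1] is stored at index [i - 1]; other indices read as [(false, false)]. *)
Definition pattern_fun (γ : pattern) : nat -> outcome := fun i =>
  if i is i'.+1 then
    if @insub nat (fun x => (x < n)%N) 'I_n i' is Some o then γ o else (false, false)
  else (false, false).

Lemma pattern_fun_ord (γ : pattern) (o : 'I_n) : pattern_fun γ o.+1 = γ o.
Proof.
rewrite /=; case: insubP => [u _ uo|]; first by rewrite (val_inj uo).
by rewrite ltn_ord.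
Qed.

Lemma pattern_fun_out (γ : pattern) i : ~~ (0 < i <= n)%N -> pattern_fun γ i = (false, false).
Proof. by case: i => //= i; case: insubP => //= u ui _; rewrite ui. Qed.

Lemma pattern_fun_set (γ : pattern) (o : 'I_n) v i :
  pattern_fun [ffun o' => if o' == o then v else γ o'] i =
  if i == o.+1 then v else pattern_fun γ i.
Proof.
case: i => //= i; rewrite eqSS; case: insubP => [u ui uv|ui] /=.
  by rewrite ffunE -val_eqE /= uv.
by case: eqP => // io; move: ui; rewrite io ltn_ord.
Qed.

Lemma eq_pattern_fun (γ γ' : pattern) : pattern_fun γ =1 pattern_fun γ' -> γ = γ'.
Proof. by move=> eqγ; apply/ffunP => o; rewrite -!pattern_fun_ord eqγ. Qed.

Definition consistent_at (x : nat -> R) (γ : pattern) :=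
  forall i, (0 < i <= n)%N -> rule i (x i) (pattern_fun γ) = pattern_fun γ i.

Lemma consistent_at_exists x : exists γ, consistent_at x γ.
Proof.
suff: forall m, (m <= n)%N -> exists γ : pattern, forall i, (0 < i <= m)%N ->
    rule i (x i) (pattern_fun γ) = pattern_fun γ i.
  by move=> /(_ n (leqnn n)) [γ γP]; exists γ.
elim=> [_|m IH ltmn]; first by exists [ffun=> (false, false)] => i /andP[/leq_trans H /H].
have [γ γP] := IH (ltnW ltmn).
pose o : 'I_n := Ordinal ltmn.
pose γ' : pattern := [ffun o' => if o' == o then rule m.+1 (x m.+1) (pattern_fun γ) else γ o'].
have eq_rule i : (i <= m.+1)%N ->
    rule i (x i) (pattern_fun γ') = rule i (x i) (pattern_fun γ).
  move=> lei; apply: rule_causal => i' /andP[_ lti'].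
  by rewrite pattern_fun_set /= ltn_eqF // (leq_trans lti' lei).
exists γ' => i /andP[i0 lei]; rewrite eq_rule // pattern_fun_set /=.
by case: eqP => [->//|/eqP ne]; apply: γP; rewrite i0 -ltnS ltn_neqAle ne.
Qed.

Lemma consistent_at_unique x γ γ' :
  consistent_at x γ -> consistent_at x γ' -> γ = γ'.
Proof.
move=> γP γ'P; apply: eq_pattern_fun; elim/ltn_ind => i IH.
case: (boolP (0 < i <= n)%N) => [iP|iN]; last by rewrite !pattern_fun_out.
by rewrite -γP // -γ'P //; apply: rule_causal => i' /andP[_ /IH].
Qed.

Definition consistent (q : nat -> Omega -> R) (γ : pattern) : set Omega :=
  \big[setI/setT]_(i <- iota 1 n) [set w | rule i (q i w) (pattern_fun γ) = pattern_fun γ i].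

Lemma consistentP q γ w : consistent q γ w <-> consistent_at (q ^~ w) γ.
Proof.
rewrite /consistent -bigcap_seq; split=> γP i.
  by move=> /andP[i0 lein]; apply: γP; rewrite /= mem_iota add1n ltnS i0 lein.
by rewrite /= mem_iota add1n ltnS; apply: γP.
Qed.

Lemma sum_indic_consistent q w : \sum_(γ : pattern) (\1_(consistent q γ) w : R) = 1.
Proof.
have [γ γP] := consistent_at_exists (q ^~ w).
rewrite (bigD1 γ) //= indicE mem_set ?consistentP // big1 ?addr0 // => γ' ne.
rewrite indicE memNset // => /consistentP γ'P.
by move: ne; rewrite (consistent_at_unique γ'P γP) eqxx.
Qed.

Lemma measurable_consistent q γ :
  (forall t bv v, measurable [set x : R | rule t x bv = v]) ->
  (forall i, measurable_fun setT (q i)) -> measurable (consistent q γ).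
Proof.
move=> mrule mq; apply: bigsetI_measurable => i _.
by rewrite -[X in measurable X]setTI; exact: mq (mrule _ _ _).
Qed.

End Consistency.

Section ThresholdRule.
Variables (R : realType) (E : nat -> nat) (g k : nat -> history -> history -> R).

Definition threshold_rule t (x : R) (bv : nat -> outcome) : outcome :=
  (x <= eval_hist E g t bv, x <= eval_hist E k t bv).

Lemma threshold_rule_causal t x bv bv' : (forall i, (0 < i < t)%N -> bv i = bv' i) ->
  threshold_rule t x bv = threshold_rule t x bv'.
Proof.
by move=> eqbv; rewrite /threshold_rule (eq_eval_hist E g eqbv) (eq_eval_hist E k eqbv).
Qed.

Lemma measurable_threshold_rule t bv v :
  measurable [set x : R | threshold_rule t x bv = v].
Proof.
have -> : [set x : R | threshold_rule t x bv = v] =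
    (fun x => x <= eval_hist E g t bv) @^-1` [set v.1] `&`
    (fun x => x <= eval_hist E k t bv) @^-1` [set v.2].
  apply/seteqP; split => x; case: v => b1 b2; rewrite /threshold_rule /=.
    by case=> <- <-.
  by case=> -> ->.
by apply: measurableI; rewrite -[X in measurable X]setTI;
  apply: measurable_fun_ler => //; exact: measurable_cst.
Qed.

Lemma sub_threshold_rule t x bv bv' : hist_mono2 t (g t) -> hist_mono2 t (k t) ->
  (forall i, (0 < i < t)%N -> sub_outcome (bv i) (bv' i)) ->
  sub_outcome (threshold_rule t x bv) (threshold_rule t x bv').
Proof.
move=> mg mk sub; have lg := le_eval_hist E mg sub; have lk := le_eval_hist E mk sub.
by apply/andP; split; apply/implyP => /le_trans; [exact | exact].
Qed.

End ThresholdRule.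

Lemma measurable_set_le (R : realType) (c : R) : measurable [set x : R | x <= c].
Proof.
rewrite -[X in measurable X]setTI.
exact: (measurable_fun_ler (@measurable_id _ _ setT) (measurable_cst c)).
Qed.

Lemma measurable_set_gt (R : realType) (c : R) : measurable [set x : R | c < x].
Proof.
rewrite -[X in measurable X]setTI.
exact: (measurable_fun_ltr (measurable_cst c) (@measurable_id _ _ setT)).
Qed.

Section NullFactor.
Context (R : realType) (d : measure_display) (Omega : measurableType d).
Variables (Pr : probability Omega R) (p : nat -> Omega -> R) (H0 : nat -> bool).
Hypothesis indep : nulls_independent Pr H0 p.

Lemma null_preimage_factor (s : seq nat) (B : nat -> set R) (C : set R) j :
  uniq s -> j \in s -> H0 j -> (forall i, measurable (B i)) -> measurable C ->
  Pr (\big[setI/setT]_(i <- s) p i @^-1` (if i == j then C else B i)) =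
  (Pr (p j @^-1` C) *
   Pr (\big[setI/setT]_(i <- s) p i @^-1` (if i == j then setT else B i)))%E.
Proof.
move=> us js nj mB mC.
set F := [seq x <- s | H0 x]; set G := [seq x <- s | predC H0 x].
have permFG : perm_eq (F ++ G) s by rewrite perm_filterC.
have jF : j \in F by rewrite mem_filter nj js.
have uF : uniq F by rewrite filter_uniq.
have aF : all H0 F by apply/allP => x; rewrite mem_filter => /andP[].
have aG : all (fun x => ~~ H0 x) G by apply/allP => x; rewrite mem_filter => /andP[].
have mBj c : measurable c -> forall i, measurable (if i == j then c else B i).
  by move=> mc i; case: (i == j).
rewrite -!(perm_big _ permFG).
rewrite (indep uF aF aG (mBj _ mC)) (indep uF aF aG (mBj _ measurableT)).
rewrite !(bigD1_seq j jF uF) /= eqxx preimage_setT probability_setT mul1e.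
have -> : \big[setI/setT]_(i <- G) p i @^-1` (if i == j then C else B i) =
          \big[setI/setT]_(i <- G) p i @^-1` (if i == j then setT else B i).
  apply: eq_big_seq => i; rewrite mem_filter => /andP[/= ni _].
  by case: eqP => // eij; move: ni; rewrite eij nj.
rewrite muleA; congr (_ * _)%E; congr (_ * _)%E.
by apply: eq_bigr => i /negbTE ->.
Qed.

End NullFactor.

Section SuperUniform.
Context (R : realType) (d : measure_display) (Omega : measurableType d).
Variables (Pr : probability Omega R) (X : Omega -> R).
Hypotheses (mX : measurable_fun setT X) (suX : superuniform Pr X).

Lemma measurable_preimage (A : set R) : measurable A -> measurable (X @^-1` A).
Proof. by move=> mA; rewrite -[X in measurable X]setTI; exact: mX. Qed.

Lemma superuniform_le c : 0 <= c -> (Pr (X @^-1` [set x | (x <= c)%R]) <= c%:E)%E.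
Proof.
move=> c0; have [c1|c1] := leP c 1; first by apply: suX; rewrite c0 c1.
apply: le_trans (probability_le1 _ (measurable_preimage (measurable_set_le c))) _.
by rewrite lee_fin ltW.
Qed.

Lemma superuniform_gt lam : 0 <= lam -> ((1 - lam)%:E <= Pr (X @^-1` [set x | (lam < x)%R]))%E.
Proof.
move=> lam0; have -> : X @^-1` [set x | (lam < x)%R] = ~` (X @^-1` [set x | (x <= lam)%R]).
  by apply/seteqP; split => w /=; rewrite ltNge => /negP.
rewrite probability_setC; last exact: measurable_preimage (measurable_set_le lam).
by rewrite EFinB leeB // superuniform_le.
Qed.

Lemma superuniform_le_ratio c lam : 0 <= c -> 0 <= lam < 1 ->
  (Pr (X @^-1` [set x | (x <= c)%R]) <=
   (c / (1 - lam))%:E * Pr (X @^-1` [set x | (lam < x)%R]))%E.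
Proof.
move=> c0 /andP[lam0 lam1].
have lam1' : 0 < 1 - lam by rewrite subr_gt0.
apply: le_trans (superuniform_le c0) _.
have -> : c%:E = ((c / (1 - lam))%:E * (1 - lam)%:E)%E.
  by rewrite -EFinM divfK // lt0r_neq0.
by apply: lee_wpmul2l; [rewrite lee_fin divr_ge0 // ltW | exact: superuniform_gt].
Qed.

End SuperUniform.

Lemma integral_indicZ d (T : measurableType d) (R : realType)
  (P : probability T R) (c : R) (A : set T) : 0 <= c -> measurable A ->
  (\int[P]_w (c * \1_A w)%:E = c%:E * P A)%E.
Proof.
move=> c0 mA; rewrite (integralZl_indic _ (fun=> A)) //=; last by rewrite ltNge c0.
by rewrite integral_indic // setIT.
Qed.

(* The levels are [alpha = g(history)], the candidacy thresholds [kappa = k(history)] whose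
   indicators form the second history, and the thresholds [lam = l(history)] of the FDP
   estimate: SAFFRON is [k = l = h], LORD is [k = g] (so [kappa = alpha]) and [l = 0]. *)
Section AsyncFDR.
Context (R : realType) (d : measure_display) (Omega : measurableType d).
Variables (Pr : probability Omega R) (p : nat -> Omega -> R).
Variables (E : nat -> nat) (H0 : nat -> bool) (a : R).
Hypothesis mp : forall t, measurable_fun setT (p t).
Hypothesis decided_late : forall t, (t <= E t)%N.
Hypothesis null_superuniform : forall t, H0 t -> superuniform Pr (p t).
Hypothesis indep : nulls_independent Pr H0 p.
Variables (g k l : nat -> history -> history -> R) (alpha kappa lam : nat -> Omega -> R).
Hypothesis mono_gk : forall t, (0 < t)%N -> hist_mono2 t (g t) /\ hist_mono2 t (k t).
Hypothesis range_gkl : forall t hR hC, (0 < t)%N ->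
  [/\ 0 <= g t hR hC, g t hR hC <= k t hR hC, 0 <= l t hR hC & l t hR hC < 1].
Hypothesis alphaE : forall t w, (0 < t)%N ->
  alpha t w = g t (hist_upto E p alpha t w) (hist_upto E p kappa t w).
Hypothesis kappaE : forall t w, (0 < t)%N ->
  kappa t w = k t (hist_upto E p alpha t w) (hist_upto E p kappa t w).
Hypothesis lamE : forall t w, (0 < t)%N ->
  lam t w = l t (hist_upto E p alpha t w) (hist_upto E p kappa t w).

Variable n : nat.

Local Notation rule := (threshold_rule E g k).
Local Notation causal := (threshold_rule_causal E g k).
Local Notation cset := (consistent rule).
Local Notation alpha_of := (eval_hist E g).
Local Notation kappa_of := (eval_hist E k).
Local Notation lam_of := (eval_hist E l).

Lemma range_levels t bv : (0 < t)%N ->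
  [/\ 0 <= alpha_of t bv, alpha_of t bv <= kappa_of t bv, 0 <= lam_of t bv & lam_of t bv < 1].
Proof. exact: range_gkl. Qed.

Definition outcomes_at w : nat -> outcome := fun i => (p i w <= alpha i w, p i w <= kappa i w).

Definition pattern_at w : pattern n := [ffun o : 'I_n => outcomes_at w o.+1].

Lemma pattern_at_fun w i : (0 < i <= n)%N -> pattern_fun (pattern_at w) i = outcomes_at w i.
Proof. by case: i => // i /andP[_ lein]; rewrite (pattern_fun_ord _ (Ordinal lein)) ffunE. Qed.

Lemma levels_at t w : (0 < t <= n.+1)%N ->
  [/\ alpha t w = alpha_of t (pattern_fun (pattern_at w)),
      kappa t w = kappa_of t (pattern_fun (pattern_at w))
    & lam t w = lam_of t (pattern_fun (pattern_at w))].
Proof.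
move=> /andP[t0 letn].
have eqbv i : (0 < i < t)%N -> outcomes_at w i = pattern_fun (pattern_at w) i.
  by move=> /andP[i0 lti]; rewrite pattern_at_fun // i0 -ltnS (leq_trans lti letn).
by rewrite alphaE // kappaE // lamE // -!(eq_eval_hist E _ eqbv).
Qed.

Lemma pattern_at_consistent w : cset p (pattern_at w) w.
Proof.
apply/consistentP => i /andP[i0 lein].
have [ea ek _] := levels_at w (introT andP (conj i0 (leq_trans lein (leqnSn n)))).
by rewrite pattern_at_fun ?i0 // /threshold_rule -ea -ek.
Qed.

Lemma consistent_pattern_at w γ : cset p γ w -> γ = pattern_at w.
Proof.
move=> /consistentP γP; have /consistentP atP := pattern_at_consistent w.
exact: (consistent_at_unique causal γP atP).
Qed.

Lemma measurable_fun_pattern_at (z : pattern n -> R) :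
  measurable_fun setT (fun w => z (pattern_at w)).
Proof.
have -> : (fun w => z (pattern_at w)) =
    (fun w => \sum_(γ : pattern n) z γ * \1_(cset p γ) w).
  apply/funext => w; rewrite (bigD1 (pattern_at w)) //= indicE.
  rewrite (mem_set (pattern_at_consistent w)) mulr1 big1 ?addr0 // => γ ne.
  rewrite indicE memNset ?mulr0 // => /consistent_pattern_at eqγ.
  by move: ne; rewrite eqγ eqxx.
apply: measurable_sum => γ; apply: measurable_funM; first exact: measurable_cst.
by apply/measurable_indic/measurable_consistent => //; exact: measurable_threshold_rule.
Qed.

(* [-1] is rejected and a candidate whatever the levels, so the pattern consistent with
   [force_rej j] does not depend on [p j]. *)
Definition force_rej j i w : R := if i == j then -1 else p i w.

Lemma measurable_force_rej j i : measurable_fun setT (force_rej j i).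
Proof. by rewrite /force_rej; case: (i == j) => //; exact: measurable_cst. Qed.

Lemma measurable_cset_force_rej j (γ : pattern n) : measurable (cset (force_rej j) γ).
Proof.
apply: measurable_consistent; [exact: measurable_threshold_rule | exact: measurable_force_rej].
Qed.

Lemma threshold_rule_neg t bv : (0 < t)%N -> rule t (-1) bv = (true, true).
Proof.
move=> t0; have [ga0 gak _ _] := range_levels bv t0.
have neg1 : -1 <= alpha_of t bv by apply: le_trans ga0; rewrite lerN10.
by rewrite /threshold_rule neg1 (le_trans neg1 gak).
Qed.

Lemma forced_pattern j (γ : pattern n) w : (0 < j <= n)%N ->
  cset (force_rej j) γ w -> pattern_fun γ j = (true, true).
Proof.
move=> jP /consistentP γP; rewrite -γP // /force_rej eqxx.
by apply: threshold_rule_neg; case/andP: jP.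
Qed.

(* Before [j] the two patterns are computed from the same p-values; if moreover [H_j] is
   rejected, both patterns have [(true, true)] at [j] and so agree afterwards too. *)
Lemma pattern_at_agree j (γ : pattern n) w : (0 < j <= n)%N -> cset (force_rej j) γ w ->
  forall i, (i < j)%N || (p j w <= alpha_of j (pattern_fun γ)) ->
  pattern_fun (pattern_at w) i = pattern_fun γ i.
Proof.
move=> jP γP; elim/ltn_ind => i IH cond.
have [iP|iN] := boolP (0 < i <= n)%N; last by rewrite !pattern_fun_out.
have /consistentP atP := pattern_at_consistent w; move/consistentP: (γP) => forcedP.
rewrite -atP // -forcedP // (causal _ _ (bv' := pattern_fun γ)); last first.
  move=> i' /andP[_ lti']; apply: IH => //; case/orP: cond => [ltij|-> ]; last by rewrite orbT.
  by rewrite (ltn_trans lti' ltij).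
rewrite /force_rej; case: eqP => [eij|_ //]; subst i.
rewrite ltnn /= in cond; rewrite threshold_rule_neg; last by case/andP: jP.
have [_ gak _ _] := range_levels (pattern_fun γ) (proj1 (andP jP)).
by rewrite /threshold_rule cond (le_trans cond gak).
Qed.

Lemma levels_forced j (γ : pattern n) w : (0 < j <= n)%N -> cset (force_rej j) γ w ->
  alpha_of j (pattern_fun (pattern_at w)) = alpha_of j (pattern_fun γ) /\
  lam_of j (pattern_fun (pattern_at w)) = lam_of j (pattern_fun γ).
Proof.
move=> jP γP; have agree i : (0 < i < j)%N -> pattern_fun (pattern_at w) i = pattern_fun γ i.
  by case/andP=> _ ltij; rewrite (pattern_at_agree jP γP) // ltij.
by split; apply: eq_eval_hist.
Qed.

Lemma sub_pattern_at j (γ : pattern n) w : (0 < j <= n)%N -> cset (force_rej j) γ w ->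
  forall i, sub_outcome (pattern_fun (pattern_at w) i) (pattern_fun γ i).
Proof.
move=> jP γP; elim/ltn_ind => i IH.
have [iP|iN] := boolP (0 < i <= n)%N; last by rewrite !pattern_fun_out.
have [->|ne] := eqVneq i j; first by rewrite /sub_outcome (forced_pattern jP γP) /= !implybT.
have /consistentP atP := pattern_at_consistent w; move/consistentP: γP => forcedP.
rewrite -atP // -forcedP // /force_rej (negbTE ne).
have [mg mk] := mono_gk (proj1 (andP iP)).
by apply: sub_threshold_rule mg mk _ => i' /andP[_ /IH].
Qed.

Definition rej_denom (γ : pattern n) : R :=
  Num.max (\sum_(1 <= i < n.+1) ((E i <= n)%N && (pattern_fun γ i).1)%:R) 1.

Lemma rej_denom_gt0 γ : 0 < rej_denom γ.
Proof. by rewrite /rej_denom lt_max ltr01 orbT. Qed.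

Lemma le_rej_denom γ γ' : (forall i, sub_outcome (pattern_fun γ i) (pattern_fun γ' i)) ->
  rej_denom γ <= rej_denom γ'.
Proof.
move=> sub; rewrite /rej_denom ge_max !le_max lexx !orbT andbT; apply/orP; left.
apply: ler_sum => i _; rewrite ler_nat; have /andP[sub1 _] := sub i.
by case: (E i <= n)%N; case: (pattern_fun γ i).1 sub1 => //= ->.
Qed.

Lemma rej_denom_at w : Num.max (num_rej E p alpha n w) 1 = rej_denom (pattern_at w).
Proof.
by rewrite /num_rej /rej_denom; congr Num.max; apply: eq_big_nat => i iP; rewrite pattern_at_fun.
Qed.

Definition rej_term j w : R :=
  (pattern_fun (pattern_at w) j).1%:R / rej_denom (pattern_at w).

Definition fdphat_event j : set Omega :=
  [set w | lam_of j (pattern_fun (pattern_at w)) < p j w].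

Definition fdphat_term j w : R :=
  alpha_of j (pattern_fun (pattern_at w)) / (1 - lam_of j (pattern_fun (pattern_at w))) /
  rej_denom (pattern_at w) * \1_(fdphat_event j) w.

Lemma measurable_rej_term j : measurable_fun setT (rej_term j).
Proof. exact: (measurable_fun_pattern_at (fun γ => (pattern_fun γ j).1%:R / rej_denom γ)). Qed.

Lemma measurable_fdphat_event j : measurable (fdphat_event j).
Proof.
rewrite -[X in measurable X]setTI.
apply: (measurable_fun_ltr _ (mp j)) => //.
exact: (measurable_fun_pattern_at (fun γ => lam_of j (pattern_fun γ))).
Qed.

Lemma measurable_fdphat_term j : measurable_fun setT (fdphat_term j).
Proof.
apply: measurable_funM; last exact: measurable_indic (measurable_fdphat_event j).
exact: (measurable_fun_pattern_at
  (fun γ => alpha_of j (pattern_fun γ) / (1 - lam_of j (pattern_fun γ)) / rej_denom γ)).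
Qed.

Lemma rej_term_ge0 j w : 0 <= rej_term j w.
Proof. by rewrite divr_ge0 // ltW // rej_denom_gt0. Qed.

Lemma level_ratio_ge0 j bv : (0 < j)%N -> 0 <= alpha_of j bv / (1 - lam_of j bv).
Proof.
by move=> j0; have [ga0 _ _ lam1] := range_levels bv j0; rewrite divr_ge0 // subr_ge0 ltW.
Qed.

Lemma fdphat_coef_ge0 j bv γ : (0 < j)%N ->
  0 <= alpha_of j bv / (1 - lam_of j bv) / rej_denom γ.
Proof. by move=> j0; rewrite divr_ge0 ?level_ratio_ge0 // ltW // rej_denom_gt0. Qed.

Lemma fdphat_term_ge0 j w : (0 < j)%N -> 0 <= fdphat_term j w.
Proof. by move=> j0; rewrite mulr_ge0 ?fdphat_coef_ge0 // indicE ler0n. Qed.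

Lemma indic_rej_term j (γ : pattern n) w : (0 < j <= n)%N ->
  \1_(cset (force_rej j) γ) w * rej_term j w =
  (rej_denom γ)^-1 *
    \1_(cset (force_rej j) γ `&` p j @^-1` [set x | x <= alpha_of j (pattern_fun γ)]) w.
Proof.
move=> jP; rewrite !indicE.
have [/set_mem γP|nγP] := boolP (w \in cset (force_rej j) γ); last first.
  by rewrite mul0r memNset ?mulr0 // => -[γw _]; rewrite (mem_set γw) in nγP.
have [ea _] := levels_forced jP γP.
have [le_pa|gt_pa] := leP (p j w) (alpha_of j (pattern_fun γ)).
  have at_γ : pattern_at w = γ.
    by apply: eq_pattern_fun => i; rewrite (pattern_at_agree jP γP) // le_pa orbT.
  by rewrite /rej_term at_γ (forced_pattern jP γP) mem_set //= mul1r mulr1 div1r.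
rewrite memNset ?mulr0; last by move=> [_]; rewrite /preimage /= leNgt gt_pa.
have /consistentP atP := pattern_at_consistent w.
by rewrite /rej_term -atP // /threshold_rule /= ea leNgt gt_pa /= mul1r mul0r.
Qed.

Lemma indic_fdphat_term_ge j (γ : pattern n) w : (0 < j <= n)%N ->
  alpha_of j (pattern_fun γ) / (1 - lam_of j (pattern_fun γ)) / rej_denom γ *
    \1_(cset (force_rej j) γ `&` p j @^-1` [set x | lam_of j (pattern_fun γ) < x]) w
  <= \1_(cset (force_rej j) γ) w * fdphat_term j w.
Proof.
move=> jP; have j0 := proj1 (andP jP); rewrite [in X in X <= _]indicE.
have [/set_mem [γP lt_lp]|_] := boolP (w \in _); last first.
  by rewrite mulr0 mulr_ge0 ?fdphat_term_ge0 // indicE ler0n.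
have [ea el] := levels_forced jP γP.
have ev : fdphat_event j w by rewrite /fdphat_event /= el.
rewrite indicE mem_set // mul1r mulr1 /fdphat_term indicE mem_set // mulr1 ea el.
apply: ler_wpM2l; first exact: level_ratio_ge0.
rewrite lef_pV2 ?posrE ?rej_denom_gt0 //; apply: le_rej_denom.
exact: sub_pattern_at jP γP.
Qed.

Lemma integral_cset_sum (q : nat -> Omega -> R) (Z : Omega -> R) :
  (forall i, measurable_fun setT (q i)) -> measurable_fun setT Z -> (forall w, 0 <= Z w) ->
  (\int[Pr]_w (Z w)%:E = \sum_(γ : pattern n) \int[Pr]_w (\1_(cset q γ) w * Z w)%:E)%E.
Proof.
move=> mq mZ Z0; rewrite -ge0_integral_sum //.
- apply: eq_integral => w _; rewrite sumEFin -mulr_suml.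
  by rewrite (sum_indic_consistent causal) mul1r.
- move=> γ; apply/measurable_EFinP; apply: measurable_funM => //.
  by apply/measurable_indic/measurable_consistent => //; exact: measurable_threshold_rule.
- by move=> γ w _; rewrite lee_fin mulr_ge0 // indicE ler0n.
Qed.

Lemma cset_force_rej_preimage j (γ : pattern n) (C : set R) : (0 < j <= n)%N ->
  pattern_fun γ j = (true, true) ->
  cset (force_rej j) γ `&` p j @^-1` C =
  \big[setI/setT]_(i <- iota 1 n) p i @^-1`
    (if i == j then C else [set x | rule i x (pattern_fun γ) = pattern_fun γ i]).
Proof.
move=> jP γj; rewrite -bigcap_seq; apply/seteqP; split => w.
  move=> [/consistentP γP Cw] i; rewrite /= mem_iota add1n ltnS => iP.
  rewrite /preimage /=; case: eqP => [->//|/eqP ne].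
  by have := γP i iP; rewrite /force_rej (negbTE ne).
move=> allP; have {}allP i : (0 < i <= n)%N ->
    (p i @^-1` (if i == j then C else [set x | rule i x (pattern_fun γ) = pattern_fun γ i])) w.
  by move=> iP; apply: allP; rewrite /= mem_iota add1n ltnS.
split; last by have := allP j jP; rewrite eqxx.
apply/consistentP => i iP; have := allP i iP.
rewrite /force_rej /preimage /=; case: eqP => [-> _|_ //].
by rewrite γj threshold_rule_neg //; case/andP: jP.
Qed.

Lemma prob_forced_preimage j (γ : pattern n) (C : set R) :
  (0 < j <= n)%N -> H0 j -> measurable C ->
  Pr (cset (force_rej j) γ `&` p j @^-1` C) = (Pr (p j @^-1` C) * Pr (cset (force_rej j) γ))%E.
Proof.
move=> jP nj mC.
have [γj|nγj] := eqVneq (pattern_fun γ j) (true, true); last first.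
  have -> : cset (force_rej j) γ = set0.
    by apply/seteqP; split => w // γP; move: nγj; rewrite (forced_pattern jP γP) eqxx.
  by rewrite set0I measure0 mule0.
rewrite -[in RHS](setIT (cset _ _)) -(preimage_setT (p j)) !cset_force_rej_preimage //.
apply: (null_preimage_factor indep) => //; first exact: iota_uniq.
- by rewrite mem_iota add1n ltnS.
- by move=> i; exact: measurable_threshold_rule.
Qed.

Lemma integral_rej_term_le j : (0 < j <= n)%N -> H0 j ->
  (\int[Pr]_w (rej_term j w)%:E <= \int[Pr]_w (fdphat_term j w)%:E)%E.
Proof.
move=> jP nj; have j0 := proj1 (andP jP).
rewrite (integral_cset_sum (measurable_force_rej j) (measurable_rej_term j) (rej_term_ge0 j)).
rewrite (integral_cset_sum (measurable_force_rej j) (measurable_fdphat_term j)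
  (fun w => @fdphat_term_ge0 j w j0)).
apply: lee_sum => γ _.
set A := cset (force_rej j) γ; have mA : measurable A := measurable_cset_force_rej j γ.
set c := alpha_of j (pattern_fun γ); set lm := lam_of j (pattern_fun γ).
have [c0 _ lm0 lm1] := range_levels (pattern_fun γ) j0.
have D0 : 0 <= (rej_denom γ)^-1 by rewrite invr_ge0 ltW // rej_denom_gt0.
have coef0 : 0 <= c / (1 - lm) / rej_denom γ by exact: fdphat_coef_ge0.
have mpre (B : set R) : measurable B -> measurable (A `&` p j @^-1` B).
  by move=> mB; apply: measurableI => //; exact: measurable_preimage.
have mle := measurable_set_le c; have mgt := measurable_set_gt lm.
have mAle := mpre _ mle; have mAgt := mpre _ mgt.
under eq_integral do rewrite indic_rej_term //.
apply: (@le_trans _ _ (\int[Pr]_w ((c / (1 - lm) / rej_denom γ) *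
    \1_(A `&` p j @^-1` [set x | lm < x]) w)%:E)%E); last first.
  apply: ge0_le_integral => //.
  - by move=> w _; rewrite lee_fin mulr_ge0 // indicE ler0n.
  - apply/measurable_EFinP/measurable_funM; first exact: measurable_cst.
    exact: measurable_indic.
  - apply/measurable_EFinP/measurable_funM; last exact: measurable_fdphat_term.
    exact: measurable_indic.
  - by move=> w _; rewrite lee_fin; exact: indic_fdphat_term_ge.
rewrite !integral_indicZ // !prob_forced_preimage //.
have -> : (c / (1 - lm) / rej_denom γ)%:E = ((rej_denom γ)^-1%:E * (c / (1 - lm))%:E)%E.
  by rewrite -EFinM mulrC.
rewrite -muleA; apply: lee_wpmul2l; first by rewrite lee_fin.
rewrite muleA; apply: lee_wpmul2r; first exact: measure_ge0.
apply: superuniform_le_ratio => //; first exact: null_superuniform.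
by rewrite lm0 lm1.
Qed.

Lemma integral_term_le j : (0 < j <= n)%N ->
  (\int[Pr]_w ((H0 j && (E j <= n)%N)%:R * rej_term j w)%:E <=
   \int[Pr]_w ((E j <= n)%N%:R * fdphat_term j w)%:E)%E.
Proof.
move=> jP; have j0 := proj1 (andP jP).
have fdphat_ge0 : (0 <= \int[Pr]_w ((E j <= n)%N%:R * fdphat_term j w)%:E)%E.
  by apply: integral_ge0 => w _; rewrite lee_fin mulr_ge0 ?fdphat_term_ge0.
have [nj|_] /= := boolP (H0 j); last first.
  by under eq_integral do rewrite mul0r; rewrite integral0.
case: (E j <= n)%N fdphat_ge0 => /= fdphat_ge0; last first.
  by under eq_integral do rewrite mul0r; rewrite integral0.
under eq_integral do rewrite mul1r; under [X in (_ <= X)%E]eq_integral do rewrite mul1r.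
exact: integral_rej_term_le.
Qed.

Lemma FDP_at w : FDP H0 E p alpha n w =
  \sum_(o < n) (H0 o.+1 && (E o.+1 <= n)%N)%:R * rej_term o.+1 w.
Proof.
rewrite /FDP rej_denom_at /num_false_rej big_add1 big_mkord /= mulr_suml.
apply: eq_bigr => o _; rewrite /rej_term pattern_at_fun ?ltn_ord //=.
by case: (H0 _); case: (E _ <= n)%N; rewrite /= ?mul1r ?mul0r.
Qed.

Lemma indic_fdphat_event j w :
  \1_(fdphat_event j) w = (lam_of j (pattern_fun (pattern_at w)) < p j w)%R%:R :> R.
Proof. by rewrite indicE /fdphat_event mem_setE. Qed.

Lemma level_ratio_at_ge0 j w : (0 < j <= n.+1)%N -> 0 <= alpha j w / (1 - lam j w).
Proof.
by move=> jP; have [-> _ ->] := levels_at w jP; apply: level_ratio_ge0; case/andP: jP.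
Qed.

Hypothesis budget : forall t w, (0 < t)%N ->
  \sum_(1 <= j < t.+1) alpha j w / (1 - lam j w) *
    (((E j < t)%N && (lam j w < p j w))%:R + (t <= E j)%N%:R)
  <= a * Num.max (num_rej_before E p alpha t w) 1.

Lemma sum_fdphat_term_le w : \sum_(o < n) (E o.+1 <= n)%N%:R * fdphat_term o.+1 w <= a.
Proof.
set D := rej_denom (pattern_at w).
have denomE : Num.max (num_rej_before E p alpha n.+1 w) 1 = D.
  by rewrite /D -rej_denom_at /num_rej_before big_nat_recr //= ltnNge decided_late addr0.
have fdphat_sumE : \sum_(o < n) (E o.+1 <= n)%N%:R * fdphat_term o.+1 w =
    (\sum_(1 <= j < n.+1)
       alpha j w / (1 - lam j w) * ((E j < n.+1)%N && (lam j w < p j w))%:R) / D.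
  rewrite big_add1 big_mkord /= mulr_suml; apply: eq_bigr => o _.
  have [ea _ el] := @levels_at o.+1 w (leqW (ltn_ord o)).
  rewrite /fdphat_term indic_fdphat_event -ea -el ltnS -/D.
  by case: (E _ <= n)%N; case: (_ < _); rewrite /= ?mulr1n ?mulr0n ?mulr0 ?mul0r ?mul1r ?mulr1.
have ratio0 j : (1 <= j < n.+2)%N -> 0 <= alpha j w / (1 - lam j w).
  by move=> /andP[j0 ltj]; apply: level_ratio_at_ge0; rewrite j0.
rewrite fdphat_sumE ler_pdivrMr ?rej_denom_gt0 // -denomE.
apply: le_trans (budget w (ltn0Sn n)).
rewrite [X in _ <= X]big_nat_recr //= -[X in X <= _]addr0 lerD //.
  apply: ler_sum_nat => j /andP[j0 ltj]; apply: ler_wpM2l; last by rewrite lerDl.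
  by apply: ratio0; rewrite j0 ltnS ltnW.
by rewrite mulr_ge0 ?addr_ge0 // ratio0 //= ltnSn.
Qed.

Lemma FDR_le : (FDR Pr H0 E p alpha n <= a%:E)%E.
Proof.
rewrite /FDR; under eq_integral do rewrite FDP_at -sumEFin.
rewrite ge0_integral_sum //; first last.
- by move=> o w _; rewrite lee_fin mulr_ge0 ?rej_term_ge0.
- by move=> o; apply/measurable_EFinP/measurable_funM => //; exact: measurable_rej_term.
apply: (@le_trans _ _ (\sum_(o < n) \int[Pr]_w ((E o.+1 <= n)%N%:R * fdphat_term o.+1 w)%:E)%E).
  by apply: lee_sum => o _; apply: integral_term_le; rewrite ltn_ord.
rewrite -ge0_integral_sum //; first last.
- by move=> o w _; rewrite lee_fin mulr_ge0 ?fdphat_term_ge0.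
- by move=> o; apply/measurable_EFinP/measurable_funM => //; exact: measurable_fdphat_term.
under eq_integral do rewrite sumEFin.
apply: (@le_trans _ _ (\int[Pr]_w (cst a%:E) w)%E).
  apply: ge0_le_integral => //.
  - by move=> w _; rewrite lee_fin sumr_ge0 // => o _; rewrite mulr_ge0 ?fdphat_term_ge0.
  - apply/measurable_EFinP/measurable_sum => o.
    by apply: measurable_funM => //; exact: measurable_fdphat_term.
  - by move=> w _; rewrite lee_fin sum_fdphat_term_le.
rewrite integral_cst // -[X in (_ <= X)%E]mule1 le_eqVlt; apply/orP; left.
by apply/eqP; congr (_ * _)%E; exact: probability_setT.
Qed.

End AsyncFDR.

Theorem theorem3 (R : realType) (d : measure_display) (Omega : measurableType d)
  (Pr : probability Omega R) (p : nat -> Omega -> R) (E : nat -> nat)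
  (H0 : nat -> bool) (a : R) :
  (forall t, measurable_fun setT (p t)) ->
  (forall t, (t <= E t)%N) ->
  (forall t, H0 t -> superuniform Pr (p t)) ->
  nulls_independent Pr H0 p ->
  (* LORD_async *)
  (forall (f : nat -> history -> R) (alpha : nat -> Omega -> R),
     (forall t, (0 < t)%N -> hist_mono t (f t)) ->
     (forall t hR, (0 < t)%N -> 0 <= f t hR) ->
     (forall t w, (0 < t)%N -> alpha t w = f t (hist_upto E p alpha t w)) ->
     (forall t w, (0 < t)%N ->
        \sum_(1 <= j < t.+1) alpha j w
          <= a * Num.max (num_rej_before E p alpha t w) 1) ->
     forall t : nat, (FDR Pr H0 E p alpha t <= a%:E)%E)
  /\
  (* SAFFRON_async *)
  (forall (g h : nat -> history -> history -> R) (alpha lambda : nat -> Omega -> R),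
     (forall t, (0 < t)%N -> hist_mono2 t (g t) /\ hist_mono2 t (h t)) ->
     (forall t hR hC, (0 < t)%N -> 0 <= g t hR hC /\ g t hR hC <= h t hR hC /\ h t hR hC < 1) ->
     (forall t w, (0 < t)%N ->
        alpha t w = g t (hist_upto E p alpha t w) (hist_upto E p lambda t w)) ->
     (forall t w, (0 < t)%N ->
        lambda t w = h t (hist_upto E p alpha t w) (hist_upto E p lambda t w)) ->
     (forall t w, (0 < t)%N ->
        \sum_(1 <= j < t.+1)
           alpha j w / (1 - lambda j w) *
             (((E j < t)%N && (lambda j w < p j w))%:R + (t <= E j)%N%:R)
          <= a * Num.max (num_rej_before E p alpha t w) 1) ->
     forall t : nat, (FDR Pr H0 E p alpha t <= a%:E)%E).
Proof.
move=> mp late su indep; split.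
- move=> f alpha mono f0 alphaE budget n.
  apply: (FDR_le mp late su indep (g := fun t hR _ => f t hR) (k := fun t hR _ => f t hR)
    (l := fun _ _ _ => 0) (kappa := alpha) (lam := fun _ _ => 0)) => //.
  + by move=> t t0; split=> h1 h2 h1' h2' sub _; exact: mono.
  + by move=> t hR hC t0; split => //; exact: f0.
  + move=> t w t0; apply: le_trans (budget t w t0); apply: ler_sum_nat => j /andP[j0 _].
    rewrite subr0 divr1; apply: ler_piMr; first by rewrite alphaE // f0.
    by case: (ltnP (E j) t); case: (0 < p j w); rewrite /= ?addr0 ?add0r.
- move=> g h alpha lambda mono range alphaE lamE budget n.
  apply: (FDR_le mp late su indep (g := g) (k := h) (l := h)
    (kappa := lambda) (lam := lambda)) => //.
  by move=> t hR hC t0; have [g0 [gh h1]] := range t hR hC t0; split => //; exact: le_trans gh.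
Qed.
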